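(* Let $A,B,C$ be non-empty convex compact subsets of $\mathbb{R}$ (i.e. compact intervals). Then the metric sum is associative on them: $$(A\oplus B)\oplus C= A\oplus (B\oplus C)=A\oplus B\oplus C.$$
   Context: For non-empty compact $A,B\subseteq\mathbb{R}$ and $b\in\mathbb{R}$, let $D(b,A)=\min_{a\in A}|b-a|$ and $\Lambda_A(b)=\{a\in A: |b-a|=D(b,A)\}$. The set of metric pairs is $\Lambda(A,B)=\{(a,b)\in A\times B: a\in\Lambda_A(b)\text{ or } b\in\Lambda_B(a)\}$. For non-empty compact $A_0,\dots,A_N\subseteq\mathbb{R}$, the metric chains are $\mathrm{Ch}(A_0,\dots,A_N)=\{(a_0,\dots,a_N)\in A_0\times\cdots\times A_N: (a_j,a_{j+1})\in\Lambda(A_j,A_{j+1}),\ j=0,\dots,N-1\}$, and for $\lambda_0,\dots,\lambda_N\in\mathbb{R}$ the metric linear combination is $\bigoplus_{j=0}^N\lambda_jA_j=\{\sum_{j=0}^N\lambda_ja_j:(a_0,\dots,a_N)\in\mathrm{Ch}(A_0,\dots,A_N)\}$. In particular $A\oplus B=\{a+b:(a,b)\in\Lambda(A,B)\}$ and $A\oplus B\oplus C=\{a+b+c:(a,b,c)\in\mathrm{Ch}(A,B,C)\}$. *)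

From HB Require Import structures.
From mathcomp Require Import all_boot all_order all_algebra.
From mathcomp Require Import all_classical all_reals all_analysis.
Set Implicit Arguments. Unset Strict Implicit. Unset Printing Implicit Defensive.
Import Order.TTheory GRing.Theory Num.Theory.
Import numFieldNormedType.Exports.
Local Open Scope classical_set_scope.
Local Open Scope ring_scope.

Section MetricSum.
Variable R : realType.

Definition nearest (A : set R) (b : R) : set R :=
  [set a | A a /\ forall a', A a' -> `|b - a| <= `|b - a'|].

Definition metric_pair (A B : set R) (a b : R) : Prop :=
  A a /\ B b /\ (nearest A b a \/ nearest B a b).

Definition msum2 (A B : set R) : set R :=
  [set x | exists a b, metric_pair A B a b /\ x = a + b].

Definition msum3 (A B C : set R) : set R :=
  [set x | exists a b c, metric_pair A B a b /\ metric_pair B C b c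
                         /\ x = a + b + c].

End MetricSum.

From HB Require Import structures.
From mathcomp Require Import all_boot all_order all_algebra.
From mathcomp Require Import all_classical all_reals all_analysis.
From mathcomp Require Import lra.
Set Implicit Arguments. Unset Strict Implicit. Unset Printing Implicit Defensive.
Import Order.TTheory GRing.Theory Num.Theory Num.Def.
Import numFieldNormedType.Exports.
Local Open Scope classical_set_scope.
Local Open Scope ring_scope.

(* A non-empty compact interval is a segment [x1, x2], and on segments the
   metric sum is the Minkowski sum: [x1, x2] (+) [y1, y2] = [x1 + y1, x2 + y2].
   Indeed, if p_I denotes the nearest-point projection onto I, then for every t
   the pair (p_I t, p_J t) is a metric pair, and t |-> p_I t + p_J t is
   continuous and runs from x1 + y1 to x2 + y2, so by the intermediate value
   theorem it hits every point in between.  Projecting the same t onto three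
   segments gives a metric chain, so A (+) B (+) C is the Minkowski sum as
   well, and all three expressions are [a1 + b1 + c1, a2 + b2 + c2]. *)

Section MetricSumInterval.
Variable R : realType.

Definition proj_itv (x1 x2 t : R) : R := maxr x1 (minr x2 t).

Lemma continuous_proj_itv (x1 x2 : R) : continuous (proj_itv x1 x2).
Proof.
apply: (@max_fun_continuous _ _ _ (fun=> x1) (minr x2)); first exact: cst_continuous.
apply: (@min_fun_continuous _ _ _ (fun=> x2) id); first exact: cst_continuous.
by move=> ?; exact: cvg_id.
Qed.

Section Projection.
Variables (x1 x2 : R).
Hypothesis x12 : x1 <= x2.

Lemma proj_itv_in (t : R) : `[x1, x2]%classic (proj_itv x1 x2 t).
Proof. by rewrite /= in_itv /= /proj_itv le_max lexx /= ge_max x12 ge_min lexx. Qed.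

Lemma proj_itv_le (t : R) : t <= x1 -> proj_itv x1 x2 t = x1.
Proof. by move=> tx1; rewrite /proj_itv min_r ?max_l // (le_trans tx1). Qed.

Lemma proj_itv_ge (t : R) : x2 <= t -> proj_itv x1 x2 t = x2.
Proof. by move=> x2t; rewrite /proj_itv min_l ?max_r. Qed.

Lemma proj_itv_id (t : R) : x1 <= t <= x2 -> proj_itv x1 x2 t = t.
Proof. by case/andP=> x1t tx2; rewrite /proj_itv min_r ?max_r. Qed.

Lemma proj_itv_gt (t : R) : t < proj_itv x1 x2 t -> proj_itv x1 x2 t = x1.
Proof.
have [/proj_itv_le //|x1t] := leP t x1.
have [x2t|tx2] := leP x2 t; first by rewrite proj_itv_ge //; lra.
by rewrite proj_itv_id ?ltxx // (ltW x1t) ltW.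
Qed.

Lemma proj_itv_lt (t : R) : proj_itv x1 x2 t < t -> proj_itv x1 x2 t = x2.
Proof.
have [/proj_itv_ge //|tx2] := leP x2 t.
have [tx1|x1t] := leP t x1; first by rewrite proj_itv_le //; lra.
by rewrite proj_itv_id ?ltxx // (ltW x1t) ltW.
Qed.

End Projection.

Lemma nearest_itv (x1 x2 a b : R) : x1 <= a <= x2 ->
  (a < b -> a = x2) -> (b < a -> a = x1) -> nearest `[x1, x2]%classic b a.
Proof.
move=> aI ab_x2 ba_x1; split; first by rewrite /= in_itv.
move=> a'; rewrite /= in_itv /= => /andP[x1a' a'x2]; move/andP: aI => [x1a ax2].
have [/[dup] /ab_x2 ax2' ab|/[dup] /ba_x1 ax1' ba|->] := ltgtP a b.
- rewrite (gtr0_norm (x := b - a)) ?ler_normr; lra.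
- rewrite (ltr0_norm (x := b - a)) ?ler_normr; lra.
- by rewrite subrr normr0.
Qed.

Lemma metric_pair_proj_itv (x1 x2 y1 y2 t : R) : x1 <= x2 -> y1 <= y2 ->
  metric_pair `[x1, x2]%classic `[y1, y2]%classic
    (proj_itv x1 x2 t) (proj_itv y1 y2 t).
Proof.
move=> x12 y12; split; [exact: proj_itv_in | split; [exact: proj_itv_in |]].
move: (proj_itv_in x12 t) (proj_itv_in y12 t); rewrite /= !in_itv /=.
move: (proj_itv_gt x12 (t := t)) (proj_itv_lt x12 (t := t)).
move: (proj_itv_gt y12 (t := t)) (proj_itv_lt y12 (t := t)).
move: (proj_itv x1 x2 t) (proj_itv y1 y2 t) => a b gt_b lt_b gt_a lt_a aI bJ.
(* If a < b, then either t <= a < b and b is the left end of J,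
   or a < t and a is the right end of I; symmetrically if b < a. *)
have [ab|ba|<-] := ltgtP a b.
- have [le_ta|lt_at] := leP t a.
    by right; apply: nearest_itv => // [|_]; [lra | apply: gt_b; lra].
  by left; apply: nearest_itv => // [_|]; [exact: lt_a | lra].
- have [le_at|lt_ta] := leP a t.
    by right; apply: nearest_itv => // [_|]; [apply: lt_b; lra | lra].
  by left; apply: nearest_itv => // [|_]; [lra | exact: gt_a].
- by left; apply: nearest_itv; rewrite // ltxx.
Qed.

Lemma continuous_hits (g : R -> R) (lo hi s : R) : continuous g -> lo <= hi ->
  g lo <= s <= g hi -> exists t, g t = s.
Proof.
move=> g_cont lohi /andP[glo_s s_ghi].
have s_in : minr (g lo) (g hi) <= s <= maxr (g lo) (g hi).
  by rewrite ge_min le_max glo_s s_ghi orbT.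
have [t _ <-] := IVT lohi (continuous_subspaceT g_cont) s_in.
by exists t.
Qed.

Lemma msum2_itv (x1 x2 y1 y2 : R) : x1 <= x2 -> y1 <= y2 ->
  msum2 `[x1, x2]%classic `[y1, y2]%classic = `[x1 + y1, x2 + y2]%classic.
Proof.
move=> x12 y12; apply/seteqP; split=> [_ [a [b [[aI [bJ _]] ->]]]|s].
  by move: aI bJ; rewrite /= !in_itv /= => /andP[? ?] /andP[? ?]; rewrite !lerD.
rewrite /= in_itv /= => s_in.
have [t <-] : exists t, proj_itv x1 x2 t + proj_itv y1 y2 t = s.
  apply: (@continuous_hits _ (minr x1 y1) (maxr x2 y2)).
  - by move=> u; apply: cvgD; apply: continuous_proj_itv.
  - by rewrite ge_min !le_max x12.
  rewrite !(proj_itv_le _ (t := minr x1 y1)) ?ge_min ?lexx ?orbT //.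
  by rewrite !(proj_itv_ge _ (t := maxr x2 y2)) ?le_max ?lexx ?orbT.
exists (proj_itv x1 x2 t), (proj_itv y1 y2 t).
by split=> //; exact: metric_pair_proj_itv.
Qed.

Lemma msum3_itv (x1 x2 y1 y2 z1 z2 : R) : x1 <= x2 -> y1 <= y2 -> z1 <= z2 ->
  msum3 `[x1, x2]%classic `[y1, y2]%classic `[z1, z2]%classic =
  `[x1 + y1 + z1, x2 + y2 + z2]%classic.
Proof.
move=> x12 y12 z12; apply/seteqP.
split=> [_ [a [b [c [[aI [bJ _]] [[_ [cK _]] ->]]]]]|s].
  move: aI bJ cK; rewrite /= !in_itv /= => /andP[? ?] /andP[? ?] /andP[? ?].
  by rewrite !lerD.
rewrite /= in_itv /= => s_in.
have [t <-] : exists t,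
    proj_itv x1 x2 t + proj_itv y1 y2 t + proj_itv z1 z2 t = s.
  apply: (@continuous_hits _ (minr x1 (minr y1 z1)) (maxr x2 (maxr y2 z2))).
  - by move=> u; apply: cvgD; [apply: cvgD|]; apply: continuous_proj_itv.
  - by rewrite ge_min !le_max x12.
  rewrite !(proj_itv_le _ (t := minr x1 (minr y1 z1))) ?ge_min ?lexx ?orbT //.
  by rewrite !(proj_itv_ge _ (t := maxr x2 (maxr y2 z2))) ?le_max ?lexx ?orbT.
exists (proj_itv x1 x2 t), (proj_itv y1 y2 t), (proj_itv z1 z2 t).
by split; [|split]; rewrite //; exact: metric_pair_proj_itv.
Qed.

Lemma compact_interval_itv (A : set R) : A !=set0 -> is_interval A -> compact A ->
  exists x1 x2, x1 <= x2 /\ A = `[x1, x2]%classic.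
Proof.
move=> A0 iA cA; have id_cont : {within A, continuous (id : R -> R)}.
  by apply: continuous_subspaceT => ?; exact: cvg_id.
have [x1 Ax1 x1_min] := compact_EVT_min A0 cA id_cont.
have [x2 Ax2 x2_max] := compact_EVT_max A0 cA id_cont.
exists x1, x2; split; first exact: x2_max.
apply/seteqP; split=> [x Ax|x]; rewrite /= in_itv /=.
  by rewrite x1_min ?x2_max ?inE.
move=> /andP[x1x xx2].
by apply: (iA x1 x2); [exact: set_mem | exact: set_mem | apply/andP].
Qed.

End MetricSumInterval.

Theorem proposition2p3 (R : realType) (A B C : set R) :
  A !=set0 -> B !=set0 -> C !=set0 ->
  is_interval A -> is_interval B -> is_interval C ->
  compact A -> compact B -> compact C ->
  msum2 (msum2 A B) C = msum2 A (msum2 B C) /\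
  msum2 A (msum2 B C) = msum3 A B C.
Proof.
move=> A0 B0 C0 iA iB iC cA cB cC.
have [a1 [a2 [a12 ->]]] := compact_interval_itv A0 iA cA.
have [b1 [b2 [b12 ->]]] := compact_interval_itv B0 iB cB.
have [c1 [c2 [c12 ->]]] := compact_interval_itv C0 iC cC.
by rewrite msum3_itv // !msum2_itv ?lerD // !addrA; split.
Qed.
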